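(* Let $\psi:[0,1]\to[0,1]$ be convex and increasing with $\psi(0)=0$, and let $C\ge e^{1/e}$. Let $x=(x_1,\dots,x_n)$ be a stochastic vector and $y=\max_i x_i$. Then \[ \sum_{j=1}^n\psi\Big(\frac{x_j}{C\prod_{k=1}^n(1-x_k)^{1-x_k}}\Big)\ \le\ \frac1y\,\psi\Big(\frac{y\,e^{1-y}}{C\,(1-y)^{1-y}}\Big). \]
   Context: A stochastic vector has nonnegative entries summing to $1$. Convention: $0^0=1$. *)

From Stdlib Require Import Reals Lra List.
Open Scope R_scope.

(* Real power a^b with the convention 0^0 = 1 (and 0^b = 0 for b <> 0);
   for a > 0 it is Rpower a b = exp (b * ln a). *)
Definition rpow (a b : R) : R :=
  if Req_EM_T a 0 then (if Req_EM_T b 0 then 1 else 0) else Rpower a b.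

Definition sumL (l : list R) : R := fold_right Rplus 0 l.
Definition prodL (l : list R) : R := fold_right Rmult 1 l.
(* maximum of the entries (entries of a stochastic vector are >= 0, list nonempty) *)
Definition maxL (l : list R) : R := fold_right Rmax 0 l.

Definition stochastic (x : list R) : Prop :=
  Forall (fun t => 0 <= t) x /\ sumL x = 1.

From Stdlib Require Import Reals List Lra.
Open Scope R_scope.

(* Write D := C * prod_k (1 - x_k)^(1 - x_k).  Convexity with psi 0 = 0 gives
   psi (x_j / D) <= (x_j / y) psi (y / D), so the left-hand side is at most
   psi (y / D) / y.  It remains to see that y / D is at most the argument
   A := y e^(1-y) / (C (1-y)^(1-y)) on the right, and that A <= 1 so that the
   monotonicity of psi applies.  Both follow from the entropy bounds
   u^u >= e^(u-1) and u^u >= e^(-1/e): the first gives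
   (1 - x_k)^(1 - x_k) >= e^(-x_k) for every k other than the maximiser, so
   D >= C e^(-(1-y)) (1-y)^(1-y), i.e. y / D <= A; the second together with
   C >= e^(1/e) and y e^(1-y) <= 1 gives A <= 1. *)

Lemma exp_le_exp a b : a <= b -> exp a <= exp b.
Proof. intros [H | ->]; [left; apply exp_increasing | right]; auto. Qed.

Lemma rpow_self_ge_exp_pred u : 0 <= u -> exp (u - 1) <= rpow u u.
Proof.
  intros Hu; unfold rpow; destruct (Req_EM_T u 0) as [-> | Hu0].
  - destruct (Req_EM_T 0 0) as [_ | H00]; [| congruence].
    apply Rle_trans with (exp 0); [apply exp_le_exp; lra | rewrite exp_0; lra].
  - unfold Rpower; apply exp_le_exp.
    assert (Eu : exp (ln u) = u) by (apply exp_ln; lra).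
    (* u ln u >= u - 1 is 1 + (-ln u) <= exp (-ln u) = 1 / u, multiplied by u *)
    pose proof (exp_ineq1_le (- ln u)) as Hineq.
    rewrite exp_Ropp, Eu in Hineq.
    assert (Hinv : u * / u = 1) by (field; lra).
    nra.
Qed.

Lemma rpow_self_ge_exp_neg_inv_e u : 0 <= u -> exp (- / exp 1) <= rpow u u.
Proof.
  intros Hu; unfold rpow; destruct (Req_EM_T u 0) as [-> | Hu0].
  - destruct (Req_EM_T 0 0) as [_ | H00]; [| congruence].
    assert (0 < / exp 1) by (apply Rinv_0_lt_compat, exp_pos).
    apply Rle_trans with (exp 0); [apply exp_le_exp; lra | rewrite exp_0; lra].
  - unfold Rpower; apply exp_le_exp.
    assert (Eu : exp (ln u) = u) by (apply exp_ln; lra).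
    (* u ln u >= -1/e is 1 + (-ln u - 1) <= exp (-ln u - 1) = 1 / (e u), multiplied by u *)
    pose proof (exp_ineq1_le (- ln u - 1)) as Hineq.
    replace (exp (- ln u - 1)) with (/ exp 1 * / u) in Hineq
      by (unfold Rminus; rewrite exp_plus, !exp_Ropp, Eu; ring).
    assert (Hinv : u * / u = 1) by (field; lra).
    assert (0 < / exp 1) by (apply Rinv_0_lt_compat, exp_pos).
    nra.
Qed.

Lemma mul_exp_one_sub_le_one y : y * exp (1 - y) <= 1.
Proof.
  pose proof (exp_ineq1_le (y - 1)) as Hineq.
  assert (E : exp (1 - y) * exp (y - 1) = 1)
    by (rewrite <- exp_plus, <- exp_0; f_equal; ring).
  pose proof (exp_pos (1 - y)); nra.
Qed.

Lemma sumL_cons a l : sumL (a :: l) = a + sumL l.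
Proof. reflexivity. Qed.

Lemma prodL_cons a l : prodL (a :: l) = a * prodL l.
Proof. reflexivity. Qed.

Lemma sumL_nonneg l : Forall (fun t => 0 <= t) l -> 0 <= sumL l.
Proof. induction 1; rewrite ?sumL_cons; cbn; lra. Qed.

Lemma sumL_nonpos l : (forall a, In a l -> a <= 0) -> sumL l <= 0.
Proof.
  induction l as [| b l IH]; intros Hl; [cbn; lra |].
  rewrite sumL_cons; pose proof (Hl b (in_eq b l)).
  enough (sumL l <= 0) by lra.
  apply IH; intros a Ha; apply Hl, in_cons, Ha.
Qed.

Lemma In_le_sumL l a : Forall (fun t => 0 <= t) l -> In a l -> a <= sumL l.
Proof.
  induction 1 as [| b l Hb Hl IH]; intros Ha; [destruct Ha |].
  rewrite sumL_cons; destruct Ha as [-> | Ha].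
  - pose proof (sumL_nonneg l Hl); lra.
  - specialize (IH Ha); lra.
Qed.

Lemma maxL_ge l a : In a l -> a <= maxL l.
Proof.
  induction l as [| b l IH]; intros Ha; [destruct Ha |].
  unfold maxL in *; cbn; destruct Ha as [-> | Ha].
  - apply Rmax_l.
  - eapply Rle_trans; [apply IH, Ha | apply Rmax_r].
Qed.

Lemma maxL_In l : Forall (fun t => 0 <= t) l -> l <> nil -> In (maxL l) l.
Proof.
  induction 1 as [| b l Hb Hl IH]; intros Hne; [congruence | clear Hne].
  unfold maxL in *; cbn.
  destruct l as [| c l].
  - left; cbn; symmetry; apply Rmax_left; lra.
  - destruct (Rle_dec b (fold_right Rmax 0 (c :: l))).
    + rewrite Rmax_right by assumption; right; apply IH; discriminate.
    + rewrite Rmax_left by lra; left; reflexivity.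
Qed.

Lemma stochastic_entry_bounds x t : stochastic x -> In t x -> 0 <= t <= 1.
Proof.
  intros [Hnn Hsum] Ht; rewrite <- Hsum; split.
  - exact (proj1 (Forall_forall _ _) Hnn t Ht).
  - exact (In_le_sumL x t Hnn Ht).
Qed.

Lemma stochastic_maxL_In x : stochastic x -> In (maxL x) x.
Proof.
  intros [Hnn Hsum]; apply maxL_In; [exact Hnn |].
  intros ->; cbn in Hsum; lra.
Qed.

Lemma stochastic_maxL_pos x : stochastic x -> 0 < maxL x.
Proof.
  intros Hx; destruct (Rlt_le_dec 0 (maxL x)) as [Hpos | Hnpos]; [exact Hpos |].
  enough (sumL x <= 0) by (destruct Hx; lra).
  apply sumL_nonpos; intros a Ha; pose proof (maxL_ge x a Ha); lra.
Qed.

Lemma prodL_map_ge_exp (f : R -> R) l :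
  (forall t, In t l -> exp (- t) <= f t) -> exp (- sumL l) <= prodL (map f l).
Proof.
  induction l as [| a l IH]; intros Hf; cbn [map]; rewrite ?sumL_cons, ?prodL_cons.
  - cbn; rewrite Ropp_0, exp_0; lra.
  - replace (- (a + sumL l)) with (- a + - sumL l) by ring; rewrite exp_plus.
    apply Rmult_le_compat; try (left; apply exp_pos).
    + apply Hf, in_eq.
    + apply IH; intros t Ht; apply Hf, in_cons, Ht.
Qed.

Lemma prodL_map_ge_exp_except (f : R -> R) l y :
  (forall t, In t l -> exp (- t) <= f t) -> In y l ->
  exp (- (sumL l - y)) * f y <= prodL (map f l).
Proof.
  intros Hf Hy.
  assert (Hfy : 0 <= f y) by (left; eapply Rlt_le_trans; [apply exp_pos | apply Hf, Hy]).
  induction l as [| a l IH]; [destruct Hy |].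
  cbn [map]; rewrite sumL_cons, prodL_cons.
  assert (Hfl : forall t, In t l -> exp (- t) <= f t) by (intros t Ht; apply Hf, in_cons, Ht).
  destruct Hy as [-> | Hy].
  - replace (- (y + sumL l - y)) with (- sumL l) by ring; rewrite Rmult_comm.
    apply Rmult_le_compat_l; [exact Hfy | apply prodL_map_ge_exp, Hfl].
  - replace (- (a + sumL l - y)) with (- a + - (sumL l - y)) by ring.
    rewrite exp_plus, Rmult_assoc.
    apply Rmult_le_compat.
    + left; apply exp_pos.
    + apply Rmult_le_pos; [left; apply exp_pos | exact Hfy].
    + apply Hf, in_eq.
    + apply IH; assumption.
Qed.

Lemma one_le_mul_rpow_self C u : exp (/ exp 1) <= C -> 0 <= u -> 1 <= C * rpow u u.
Proof.
  intros HC Hu; pose proof (rpow_self_ge_exp_neg_inv_e u Hu) as Hr.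
  assert (E : exp (/ exp 1) * exp (- / exp 1) = 1)
    by (rewrite <- exp_plus, <- exp_0; f_equal; ring).
  pose proof (exp_pos (/ exp 1)); pose proof (exp_pos (- / exp 1)); nra.
Qed.

Lemma stochastic_prodL_rpow_ge x : stochastic x ->
  exp (- (1 - maxL x)) * rpow (1 - maxL x) (1 - maxL x)
  <= prodL (map (fun t => rpow (1 - t) (1 - t)) x).
Proof.
  intros Hx; set (y := maxL x); replace (- (1 - y)) with (- (sumL x - y)) by (rewrite (proj2 Hx); ring).
  apply (prodL_map_ge_exp_except (fun t => rpow (1 - t) (1 - t))); [| apply stochastic_maxL_In, Hx].
  intros t Ht; pose proof (stochastic_entry_bounds x t Hx Ht).
  pose proof (rpow_self_ge_exp_pred (1 - t) ltac:(lra)) as Hr.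
  replace (1 - t - 1) with (- t) in Hr by ring; exact Hr.
Qed.

Lemma div_mul_le_of_exp_mul_le C r P y : 0 < y -> 0 < C -> 1 <= C * r ->
  exp (- (1 - y)) * r <= P -> y / (C * P) <= y * exp (1 - y) / (C * r).
Proof.
  intros Hy HC HCr HP.
  assert (Hr : 0 < r) by nra.
  assert (HE : 0 < C * (exp (- (1 - y)) * r)) by (pose proof (exp_pos (- (1 - y))); nra).
  apply Rle_trans with (y / (C * (exp (- (1 - y)) * r))).
  - apply Rmult_le_compat_l; [lra | apply Rinv_le_contravar; [exact HE | nra]].
  - right; rewrite exp_Ropp; pose proof (exp_pos (1 - y)); field; repeat split; lra.
Qed.

Lemma argument_le_one C r y : 1 <= C * r -> y * exp (1 - y) / (C * r) <= 1.
Proof.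
  intros HCr; pose proof (mul_exp_one_sub_le_one y) as Ha.
  pose proof (Rinv_0_lt_compat (C * r) ltac:(lra)) as Hb.
  assert (Hinv : C * r * / (C * r) = 1) by (apply Rinv_r; lra).
  unfold Rdiv; set (a := y * exp (1 - y)) in *; set (b := / (C * r)) in *.
  assert (a * b <= b) by nra.
  assert (b <= 1) by nra.
  lra.
Qed.

Section ConvexThroughOrigin.

Variable psi : R -> R.
Hypothesis psi_convex : forall s t l, 0 <= s <= 1 -> 0 <= t <= 1 -> 0 <= l <= 1 ->
  psi (l * s + (1 - l) * t) <= l * psi s + (1 - l) * psi t.
Hypothesis psi0 : psi 0 = 0.

Lemma convex_scale_le s l : 0 <= s <= 1 -> 0 <= l <= 1 -> psi (l * s) <= l * psi s.
Proof.
  intros Hs Hl; pose proof (psi_convex s 0 l Hs ltac:(lra) Hl) as H.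
  rewrite Rmult_0_r, Rplus_0_r, psi0 in H; lra.
Qed.

Lemma sumL_map_le_scaled_max D y l : 0 < y -> 0 < D -> y / D <= 1 ->
  Forall (fun t => 0 <= t <= y) l ->
  sumL (map (fun t => psi (t / D)) l) <= psi (y / D) / y * sumL l.
Proof.
  intros Hy HD HyD; induction 1 as [| t l Ht Hl IH]; cbn [map]; rewrite ?sumL_cons.
  - cbn; lra.
  - assert (Hscale : 0 <= t / y <= 1).
    { pose proof (Rinv_0_lt_compat y Hy); assert (y * / y = 1) by (field; lra).
      unfold Rdiv; split; nra. }
    assert (HyD0 : 0 <= y / D)
      by (unfold Rdiv; pose proof (Rinv_0_lt_compat D HD); nra).
    pose proof (convex_scale_le (y / D) (t / y) ltac:(lra) Hscale) as Hc.
    replace (t / y * (y / D)) with (t / D) in Hc by (field; lra).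
    replace (psi (y / D) / y * (t + sumL l))
      with (t / y * psi (y / D) + psi (y / D) / y * sumL l) by (field; lra).
    lra.
Qed.

End ConvexThroughOrigin.

Theorem lemma5p7 (psi : R -> R) (C : R) (x : list R)
  (Hpsi_range : forall t, 0 <= t <= 1 -> 0 <= psi t <= 1)
  (Hpsi_convex : forall s t l, 0 <= s <= 1 -> 0 <= t <= 1 -> 0 <= l <= 1 ->
      psi (l * s + (1 - l) * t) <= l * psi s + (1 - l) * psi t)
  (Hpsi_incr : forall s t, 0 <= s -> s <= t -> t <= 1 -> psi s <= psi t)
  (Hpsi0 : psi 0 = 0)
  (HC : exp (/ exp 1) <= C)
  (Hx : stochastic x) :
  let y := maxL x in
  sumL (map (fun xj =>
          psi (xj / (C * prodL (map (fun xk => rpow (1 - xk) (1 - xk)) x)))) x)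
  <= / y * psi (y * exp (1 - y) / (C * rpow (1 - y) (1 - y))).
Proof.
  intros y.
  set (P := prodL (map (fun xk => rpow (1 - xk) (1 - xk)) x)).
  set (A := y * exp (1 - y) / (C * rpow (1 - y) (1 - y))).
  assert (Hy : 0 < y <= 1).
  { split; [apply stochastic_maxL_pos, Hx |].
    apply (stochastic_entry_bounds x), stochastic_maxL_In; exact Hx. }
  assert (HCr : 1 <= C * rpow (1 - y) (1 - y)) by (apply one_le_mul_rpow_self; [exact HC | lra]).
  assert (HC0 : 0 < C) by (eapply Rlt_le_trans; [apply exp_pos | exact HC]).
  assert (HP : exp (- (1 - y)) * rpow (1 - y) (1 - y) <= P) by apply stochastic_prodL_rpow_ge, Hx.
  assert (HCP : 0 < C * P) by (pose proof (exp_pos (- (1 - y))); nra).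
  assert (HyA : y / (C * P) <= A) by (apply div_mul_le_of_exp_mul_le; lra).
  assert (HA : A <= 1) by apply argument_le_one, HCr.
  assert (HyD0 : 0 <= y / (C * P)) by (unfold Rdiv; pose proof (Rinv_0_lt_compat _ HCP); nra).
  assert (Hentries : Forall (fun t => 0 <= t <= y) x).
  { apply Forall_forall; intros t Ht; split.
    - apply (stochastic_entry_bounds x t Hx Ht).
    - apply maxL_ge, Ht. }
  pose proof (sumL_map_le_scaled_max psi Hpsi_convex Hpsi0 (C * P) y x
                ltac:(lra) HCP ltac:(lra) Hentries) as Hsum.
  rewrite (proj2 Hx) in Hsum.
  pose proof (Hpsi_incr _ A HyD0 HyA HA) as Hmono.
  pose proof (Rinv_0_lt_compat y ltac:(lra)).
  unfold Rdiv at 2 in Hsum; nra.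
Qed.
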